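(* Let $d\ge2$ be even, $\mathcal I_d=\{-\tfrac d2,\ldots,\tfrac d2-1\}$, $\mathcal H_d$ with orthonormal basis $\{|j\rangle\}_{j\in\mathcal I_d}$, $|ij\rangle=|i\rangle\otimes|j\rangle$, $\omega^x=e^{2\pi ix/d}$ for real $x$, $\hat Q=\sum_j j|j\rangle\langle j|$, $\widetilde{|k\rangle}=d^{-1/2}\sum_j\omega^{kj}|j\rangle$, $\hat P=\sum_k k\widetilde{|k\rangle}\widetilde{\langle k|}$, $V_{\alpha\beta}=\omega^{\alpha\hat Q+\beta\hat Q^2}$, $\tilde V_{\alpha\beta}=\omega^{\alpha\hat P+\beta\hat P^2}$. Define $G(X)=\mathbb E_{\alpha\beta}V_{\alpha\beta}^{\otimes2}X(V_{\alpha\beta}^\dagger)^{\otimes2}$ and $\tilde G(X)=\mathbb E_{\alpha\beta}\tilde V_{\alpha\beta}^{\otimes2}X(\tilde V_{\alpha\beta}^\dagger)^{\otimes2}$ with $\alpha,\beta$ independent uniform on $[0,d)$, and $\mathcal R=G\circ\tilde G\circ G$. Let $I=\sum_{ab}|ab\rangle\langle ab|$, $F=\sum_{ab}|ab\rangle\langle ba|$, $E=\sum_i|ii\rangle\langle ii|$. Let $i\in\mathcal I_d$ and $u\in\mathcal I_d\setminus\{0\}$, where additions such as $i+u$, $a+u$ are taken modulo $d$ with values in $\mathcal I_d$. Then for $i,j,i',j'\in\mathcal I_d$ with $\{i',j'\}\ne\{i,j\}$, $\mathcal R(|ij\rangle\langle i'j'|)=0$, and $\mathcal R(|i,i+u\rangle\langle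 i,i+u|)=\frac1{d^2}\sum_a|a,a+u\rangle\langle a,a+u|+\frac I{d^2}-\frac{I+F-E}{d^3}$, $\mathcal R(|i,i+u\rangle\langle i+u,i|)=\frac1{d^2}\sum_a|a,a+u\rangle\langle a+u,a|+\frac F{d^2}-\frac{I+F-E}{d^3}$, $\mathcal R(|ii\rangle\langle ii|)=\frac{I+F}{d^2}-\frac{I+F-E}{d^3}$, with sums over $a\in\mathcal I_d$. *)

From Stdlib Require Import Reals ZArith List.
From Coquelicot Require Import Coquelicot.
Open Scope R_scope.

Definition Idx (d : Z) : list Z :=
  map (fun k : nat => (Z.of_nat k - d / 2)%Z) (seq 0 (Z.to_nat d)).

Definition wrap (d x : Z) : Z := (((x + d / 2) mod d) - d / 2)%Z.

Definition omega (d : Z) (x : R) : C :=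
  (cos (2 * PI * x / IZR d), sin (2 * PI * x / IZR d)).

Definition sumI {A : Type} (add : A -> A -> A) (zero : A) (d : Z) (f : Z -> A) : A :=
  fold_right add zero (map f (Idx d)).
Definition sumC (d : Z) (f : Z -> C) : C := sumI Cplus (RtoC 0) d f.

Definition delta (x y : Z) : C := if Z.eqb x y then RtoC 1 else RtoC 0.

(* Operators on H_d : matrix entries <x| A |y> with x, y in I_d. *)
Definition op1 := Z -> Z -> C.
(* Operators on H_d (x) H_d : entries <a b| X |a' b'>. *)
Definition op2 := Z -> Z -> Z -> Z -> C.

(* |j> has components delta_{x j}; the Fourier vector ~|k> = d^{-1/2} sum_j omega^{kj} |j>. *)
Definition fket (d k x : Z) : C :=
  Cmult (RtoC (/ sqrt (IZR d))) (omega d (IZR (k * x))).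

(* V_{alpha beta} = omega^{alpha Q + beta Q^2} = sum_j omega^{alpha j + beta j^2} |j><j| *)
Definition Vop (d : Z) (al be : R) : op1 := fun x y =>
  sumC d (fun j => Cmult (omega d (al * IZR j + be * IZR j ^ 2))
                         (Cmult (delta x j) (Cconj (delta y j)))).
(* ~V_{alpha beta} = omega^{alpha P + beta P^2} = sum_k omega^{alpha k + beta k^2} ~|k><k~| *)
Definition Vtop (d : Z) (al be : R) : op1 := fun x y =>
  sumC d (fun k => Cmult (omega d (al * IZR k + be * IZR k ^ 2))
                         (Cmult (fket d k x) (Cconj (fket d k y)))).

Definition tens (A B : op1) : op2 := fun a b a' b' => Cmult (A a a') (B b b').
Definition mul2 (d : Z) (X Y : op2) : op2 := fun a b a' b' =>
  sumC d (fun c => sumC d (fun e => Cmult (X a b c e) (Y c e a' b'))).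
Definition adj2 (X : op2) : op2 := fun a b a' b' => Cconj (X a' b' a b).

Definition conj2 (d : Z) (U : op1) (X : op2) : op2 :=
  mul2 d (mul2 d (tens U U) X) (adj2 (tens U U)).

Definition Expect (d : Z) (f : R -> R -> C) : C :=
  Cmult (RtoC (/ (IZR d * IZR d)))
    (RInt (V := C_R_CompleteNormedModule)
       (fun al => RInt (V := C_R_CompleteNormedModule) (fun be => f al be) 0 (IZR d))
       0 (IZR d)).

Definition Gch (d : Z) (X : op2) : op2 := fun a b a' b' =>
  Expect d (fun al be => conj2 d (Vop d al be) X a b a' b').
Definition Gtch (d : Z) (X : op2) : op2 := fun a b a' b' =>
  Expect d (fun al be => conj2 d (Vtop d al be) X a b a' b').
Definition Rch (d : Z) (X : op2) : op2 := Gch d (Gtch d (Gch d X)).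

Definition ketbra (i j i' j' : Z) : op2 := fun a b a' b' =>
  Cmult (Cmult (delta a i) (delta b j)) (Cmult (delta a' i') (delta b' j')).

Definition Iop : op2 := fun a b a' b' => Cmult (delta a a') (delta b b').
Definition Fop : op2 := fun a b a' b' => Cmult (delta a b') (delta b a').
Definition Eop : op2 := fun a b a' b' =>
  Cmult (Cmult (delta a b) (delta a a')) (delta a b').

Definition zero2 : op2 := fun _ _ _ _ => RtoC 0.
Definition add2 (X Y : op2) : op2 := fun a b a' b' => Cplus (X a b a' b') (Y a b a' b').
Definition sub2 (X Y : op2) : op2 := fun a b a' b' => Cminus (X a b a' b') (Y a b a' b').
Definition scal2 (r : R) (X : op2) : op2 := fun a b a' b' => Cmult (RtoC r) (X a b a' b').
Definition sum2 (d : Z) (f : Z -> op2) : op2 := fun a b a' b' => sumC d (fun x => f x a b a' b').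

Definition op_eq (d : Z) (X Y : op2) : Prop :=
  forall a b a' b', In a (Idx d) -> In b (Idx d) -> In a' (Idx d) -> In b' (Idx d) ->
    X a b a' b' = Y a b a' b'.

Definition corr (d : Z) : op2 := scal2 (/ IZR d ^ 3) (sub2 (add2 Iop Fop) Eop).

From Stdlib Require Import Reals ZArith List Lia Lra FunctionalExtensionality.
From Coquelicot Require Import Coquelicot.
Open Scope R_scope.

(* Averaging over [alpha] and [beta] annihilates every phase [omega^(N alpha + M beta)]
   with [(N, M) <> (0, 0)]. As [V (x) V] multiplies [|ab>] by
   [omega^((a + b) alpha + (a^2 + b^2) beta)], the channel G multiplies the entry
   [<ab|X|a'b'>] by the indicator of [a + b = a' + b' /\ a^2 + b^2 = a'^2 + b'^2],
   i.e. of [{a', b'} = {a, b}] ([moment_mask]), which entrywise is [I + F - E].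
   Expanding each [~V] in the Fourier basis, the same argument turns
   [G~(|pq><p'q'|)] into a sum of [d^4] phases over the index pairs with
   [{k', l'} = {k, l}], and the resulting geometric sums over [Z/dZ] leave
     [d^-2 ([a - a' = p - p'] [b - b' = q - q'] + [a - b' = p - q'] [b - a' = q - p'])
      - d^-3 [a + b - a' - b' = p + q - p' - q']]          (congruences mod d).
   The two outer G's multiply this by the pair indicators of [(p, q, p', q')] and
   [(a, b, a', b')], and the four identities follow by comparing Kronecker deltas. *)

Lemma sin_IZR_mul_PI (t : Z) : sin (IZR t * PI) = 0.
Proof. apply sin_eq_0_1. now exists t. Qed.

Lemma cos_period_Z (x : R) (t : Z) : cos (x + 2 * IZR t * PI) = cos x.
Proof.
  rewrite cos_plus, Rmult_assoc, cos_2a_sin, sin_2a, sin_IZR_mul_PI. ring.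
Qed.

Lemma sin_period_Z (x : R) (t : Z) : sin (x + 2 * IZR t * PI) = sin x.
Proof.
  rewrite sin_plus, Rmult_assoc, cos_2a_sin, sin_2a, sin_IZR_mul_PI. ring.
Qed.

Lemma is_RInt_derive_eq0 (F f : R -> R) (a b : R) :
  (forall x, is_derive F x (f x)) -> (forall x, continuous f x) -> F b = F a ->
  is_RInt f a b 0.
Proof.
  intros HF Hf Hab.
  replace 0 with (minus (F b) (F a)) by (rewrite Hab; unfold minus, plus, opp; simpl; ring).
  apply (is_RInt_derive (V := R_CompleteNormedModule)); auto.
Qed.

(* Stating [l = l'] at type [C], rather than at the carrier of [C_R_NormedModule],
   keeps it within reach of [ring]. *)
Lemma is_RInt_C_eq (f : R -> C) (a b : R) (l l' : C) :
  is_RInt (V := C_R_NormedModule) f a b l -> l = l' ->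
  is_RInt (V := C_R_NormedModule) f a b l'.
Proof. now intros H <-. Qed.

Lemma is_RInt_C_const (a b : R) (c : C) :
  is_RInt (V := C_R_NormedModule) (fun _ => c) a b (RtoC (b - a) * c)%C.
Proof.
  eapply is_RInt_C_eq; [apply is_RInt_const |].
  apply injective_projections; cbn; unfold mult; cbn; ring.
Qed.

Lemma is_RInt_C_0 (a b : R) :
  is_RInt (V := C_R_NormedModule) (fun _ => RtoC 0) a b (RtoC 0).
Proof.
  eapply is_RInt_C_eq; [apply is_RInt_const |].
  apply (scal_zero_r (V := C_R_NormedModule)).
Qed.

Definition lsum {A : Type} (l : list A) (f : A -> C) : C :=
  fold_right Cplus (RtoC 0) (map f l).

Lemma sumC_lsum (d : Z) (f : Z -> C) : sumC d f = lsum (Idx d) f.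
Proof. reflexivity. Qed.

Section ListSums.

Context {A : Type}.
Implicit Types (l : list A) (f g : A -> C).

Lemma lsum_nil f : lsum nil f = RtoC 0.
Proof. reflexivity. Qed.

Lemma lsum_cons x l f : lsum (x :: l) f = (f x + lsum l f)%C.
Proof. reflexivity. Qed.

Lemma lsum_app l1 l2 f : lsum (l1 ++ l2) f = (lsum l1 f + lsum l2 f)%C.
Proof.
  induction l1 as [|x l1 IH]; cbn [app]; rewrite ?lsum_nil, ?lsum_cons, ?IH; ring.
Qed.

Lemma lsum_map {B : Type} (h : B -> A) (l : list B) f :
  lsum (map h l) f = lsum l (fun x => f (h x)).
Proof. unfold lsum. now rewrite map_map. Qed.

Lemma lsum_ext l f g : (forall x, In x l -> f x = g x) -> lsum l f = lsum l g.
Proof.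
  intros H. unfold lsum. f_equal. apply map_ext_in, H.
Qed.

Lemma lsum_add l f g : lsum l (fun x => f x + g x)%C = (lsum l f + lsum l g)%C.
Proof.
  induction l as [|x l IH]; rewrite ?lsum_nil, ?lsum_cons, ?IH; ring.
Qed.

Lemma lsum_sub l f g : lsum l (fun x => f x - g x)%C = (lsum l f - lsum l g)%C.
Proof.
  induction l as [|x l IH]; rewrite ?lsum_nil, ?lsum_cons, ?IH; ring.
Qed.

Lemma lsum_mull l c f : lsum l (fun x => c * f x)%C = (c * lsum l f)%C.
Proof.
  induction l as [|x l IH]; rewrite ?lsum_nil, ?lsum_cons, ?IH; ring.
Qed.

Lemma lsum_mulr l c f : lsum l (fun x => f x * c)%C = (lsum l f * c)%C.
Proof.
  induction l as [|x l IH]; rewrite ?lsum_nil, ?lsum_cons, ?IH; ring.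
Qed.

Lemma lsum_const l c : lsum l (fun _ => c) = (RtoC (INR (length l)) * c)%C.
Proof.
  induction l as [|x l IH].
  - rewrite lsum_nil. simpl. ring.
  - rewrite lsum_cons, IH. cbn [length]. rewrite S_INR, RtoC_plus. ring.
Qed.

Lemma lsum_eq0 l f : (forall x, In x l -> f x = RtoC 0) -> lsum l f = RtoC 0.
Proof.
  intros H. rewrite (lsum_ext l f (fun _ => RtoC 0)) by exact H.
  rewrite lsum_const. ring.
Qed.

Lemma Cconj_lsum l f : Cconj (lsum l f) = lsum l (fun x => Cconj (f x)).
Proof.
  induction l as [|x l IH].
  - apply injective_projections; simpl; ring.
  - rewrite !lsum_cons, Cplus_conj, IH. reflexivity.
Qed.

End ListSums.

Lemma lsum_mul_lsum {A B : Type} (l : list A) (l' : list B) (f : A -> C) (g : B -> C) :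
  (lsum l f * lsum l' g)%C = lsum l (fun x => lsum l' (fun y => f x * g y))%C.
Proof.
  rewrite <- lsum_mulr. apply lsum_ext. intros x _. now rewrite <- lsum_mull.
Qed.

Section QuadrupleSums.

Context {A : Type}.
Implicit Types (l : list A) (f g h j : A -> C).

Definition lsum4 (l : list A) (F : A -> A -> A -> A -> C) : C :=
  lsum l (fun k => lsum l (fun m => lsum l (fun k' => lsum l (fun m' => F k m k' m')))).

Lemma lsum4_ext l (F G : A -> A -> A -> A -> C) :
  (forall k m k' m', In k l -> In m l -> In k' l -> In m' l -> F k m k' m' = G k m k' m') ->
  lsum4 l F = lsum4 l G.
Proof. intros H. unfold lsum4. repeat (apply lsum_ext; intros). auto. Qed.

Lemma lsum4_mull l c (F : A -> A -> A -> A -> C) :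
  lsum4 l (fun k m k' m' => c * F k m k' m')%C = (c * lsum4 l F)%C.
Proof.
  unfold lsum4. rewrite <- lsum_mull.
  repeat (apply lsum_ext; intros; rewrite <- ?lsum_mull). reflexivity.
Qed.

Lemma lsum4_prod l f g h j :
  (lsum l f * lsum l g * Cconj (lsum l h * lsum l j))%C =
  lsum4 l (fun k m k' m' => f k * g m * Cconj (h k' * j m'))%C.
Proof.
  rewrite Cmult_conj, !Cconj_lsum, (lsum_mul_lsum l l f g),
    (lsum_mul_lsum l l (fun x => Cconj (h x)) (fun y => Cconj (j y))).
  unfold lsum4. rewrite <- lsum_mulr. apply lsum_ext; intros k _.
  rewrite <- lsum_mulr. apply lsum_ext; intros m _.
  rewrite <- lsum_mull. apply lsum_ext; intros k' _.
  rewrite <- lsum_mull. apply lsum_ext; intros m' _.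
  rewrite Cmult_conj. ring.
Qed.

End QuadrupleSums.

Definition deltaR (x y : Z) : R := if Z.eqb x y then 1 else 0.

Lemma delta_RtoC (x y : Z) : delta x y = RtoC (deltaR x y).
Proof. unfold delta, deltaR. now destruct (Z.eqb x y). Qed.

Lemma deltaR_sym (x y : Z) : deltaR x y = deltaR y x.
Proof. unfold deltaR. now rewrite Z.eqb_sym. Qed.

Lemma delta_sym (x y : Z) : delta x y = delta y x.
Proof. now rewrite !delta_RtoC, deltaR_sym. Qed.

Lemma Cconj_RtoC (r : R) : Cconj (RtoC r) = RtoC r.
Proof. apply injective_projections; simpl; ring. Qed.

Lemma Cconj_delta (x y : Z) : Cconj (delta x y) = delta x y.
Proof. now rewrite delta_RtoC, Cconj_RtoC. Qed.

Lemma lsum_pick (l : list Z) (a : Z) (f : Z -> C) :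
  NoDup l -> In a l -> lsum l (fun x => delta x a * f x)%C = f a.
Proof.
  induction l as [|b l IH]; intros Hnd Ha; [destruct Ha|].
  inversion Hnd as [|? ? Hb Hnd']; subst.
  rewrite lsum_cons. destruct Ha as [<- | Ha].
  - rewrite lsum_eq0.
    + unfold delta. rewrite Z.eqb_refl. ring.
    + intros x Hx. unfold delta. destruct (Z.eqb_spec x b); [congruence | ring].
  - rewrite IH by assumption. unfold delta.
    destruct (Z.eqb_spec b a); [congruence | ring].
Qed.

Lemma lsum2_pick (l : list Z) (p q : Z) (f : Z -> Z -> C) :
  NoDup l -> In p l -> In q l ->
  lsum l (fun x => lsum l (fun y => delta x p * delta y q * f x y))%C = f p q.
Proof.
  intros Hnd Hp Hq.
  rewrite (lsum_ext l _ (fun x => delta x p * lsum l (fun y => delta y q * f x y))%C).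
  - now rewrite lsum_pick, lsum_pick.
  - intros x _. rewrite <- lsum_mull. apply lsum_ext. intros y _. ring.
Qed.

Lemma lsum_seq_shift (n : nat) (F : nat -> C) :
  F n = F O -> lsum (seq 1 n) F = lsum (seq 0 n) F.
Proof.
  intros Hn.
  assert (E : (F O + lsum (seq 1 n) F)%C = (lsum (seq 0 n) F + F n)%C).
  { rewrite <- lsum_cons.
    change (lsum (seq 0 (S n)) F = (lsum (seq 0 n) F + F n)%C).
    rewrite seq_S, lsum_app, lsum_cons, lsum_nil, Nat.add_0_l. ring. }
  rewrite Hn in E.
  replace (lsum (seq 1 n) F) with (F O + lsum (seq 1 n) F - F O)%C by ring.
  rewrite E. ring.
Qed.

(** * Index pairs with equal first and second moments *)

Ltac deltaR_cases :=
  unfold deltaR;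
  repeat match goal with |- context [Z.eqb ?x ?y] => destruct (Z.eqb_spec x y) end.

Lemma moments_determine_pair (k l k' l' : Z) :
  (k + l - k' - l' = 0)%Z -> (k * k + l * l - k' * k' - l' * l' = 0)%Z ->
  (k' = k /\ l' = l) \/ (k' = l /\ l' = k).
Proof.
  intros Hsum Hsq.
  assert (H : ((k' - k) * (k' - l) = 0)%Z) by nia.
  apply Z.mul_eq_0 in H. lia.
Qed.

Lemma pair_eq_dec (a b a' b' : Z) :
  {(a' = a /\ b' = b) \/ (a' = b /\ b' = a)} + {~ ((a' = a /\ b' = b) \/ (a' = b /\ b' = a))}.
Proof.
  destruct (Z.eq_dec a' a), (Z.eq_dec b' b), (Z.eq_dec a' b), (Z.eq_dec b' a);
    (left; tauto) || (right; tauto).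
Qed.

Definition moment_mask (a b a' b' : Z) : R :=
  deltaR (a + b - a' - b') 0 * deltaR (a * a + b * b - a' * a' - b' * b') 0.

Lemma moment_mask_refl (a b : Z) : moment_mask a b a b = 1.
Proof.
  unfold moment_mask.
  replace (a + b - a - b)%Z with 0%Z by ring.
  replace (a * a + b * b - a * a - b * b)%Z with 0%Z by ring.
  unfold deltaR. simpl. ring.
Qed.

Lemma moment_mask_swap (a b : Z) : moment_mask a b b a = 1.
Proof.
  unfold moment_mask.
  replace (a + b - b - a)%Z with 0%Z by ring.
  replace (a * a + b * b - b * b - a * a)%Z with 0%Z by ring.
  unfold deltaR. simpl. ring.
Qed.

Lemma moment_mask_eq1 (a b a' b' : Z) :
  (a' = a /\ b' = b) \/ (a' = b /\ b' = a) -> moment_mask a b a' b' = 1.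
Proof.
  intros [[-> ->] | [-> ->]]; [apply moment_mask_refl | apply moment_mask_swap].
Qed.

Lemma moment_mask_eq0 (a b a' b' : Z) :
  ~ ((a' = a /\ b' = b) \/ (a' = b /\ b' = a)) -> moment_mask a b a' b' = 0.
Proof.
  intros Hne. unfold moment_mask, deltaR.
  destruct (Z.eqb_spec (a + b - a' - b') 0) as [Hs | Hs],
    (Z.eqb_spec (a * a + b * b - a' * a' - b' * b') 0) as [Hq | Hq]; try ring.
  exfalso. now apply Hne, moments_determine_pair.
Qed.

Lemma moment_mask_pairs (a b a' b' : Z) :
  moment_mask a b a' b' =
  deltaR a a' * deltaR b b' + deltaR a b' * deltaR b a' - deltaR a b * deltaR a a' * deltaR a b'.
Proof.
  destruct (pair_eq_dec a b a' b') as [[[-> ->] | [-> ->]] | Hne].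
  - rewrite moment_mask_refl. deltaR_cases; subst; try congruence; ring.
  - rewrite moment_mask_swap. deltaR_cases; subst; try congruence; ring.
  - rewrite moment_mask_eq0 by exact Hne. deltaR_cases; subst; try ring; exfalso; tauto.
Qed.

Ltac moment_mask_cases a b a' b' :=
  destruct (pair_eq_dec a b a' b') as [[[-> ->] | [-> ->]] | Hne];
  [rewrite moment_mask_refl | rewrite moment_mask_swap | rewrite (moment_mask_eq0 _ _ _ _ Hne)];
  deltaR_cases; subst; try congruence; try ring; exfalso; tauto.

Lemma moment_mask_absorb_id (a b a' b' : Z) :
  moment_mask a b a' b' * (deltaR a a' * deltaR b b') = deltaR a a' * deltaR b b'.
Proof. moment_mask_cases a b a' b'. Qed.

Lemma moment_mask_absorb_swap (a b a' b' : Z) :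
  moment_mask a b a' b' * (deltaR a b' * deltaR b a') = deltaR a b' * deltaR b a'.
Proof. moment_mask_cases a b a' b'. Qed.

Lemma moment_mask_shift (s : Z -> Z) (a b a' b' : Z) :
  s a <> a ->
  moment_mask a b a' b' * (deltaR (s a) b' * deltaR (s a') b) =
  deltaR a a' * deltaR (s a) b * deltaR (s a) b'.
Proof. intros Hs. moment_mask_cases a b a' b'. Qed.

Lemma moment_mask_shift_swap (s : Z -> Z) (a b a' b' : Z) :
  s a <> a ->
  moment_mask a b a' b' * (deltaR (s a) a' * deltaR (s b') b) =
  deltaR a b' * deltaR (s a) b * deltaR (s a) a'.
Proof. intros Hs. moment_mask_cases a b a' b'. Qed.

Lemma lsum4_moment_mask (l : list Z) (g : Z -> Z -> Z -> Z -> C) :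
  NoDup l ->
  lsum4 l (fun k m k' m' => RtoC (moment_mask k m k' m') * g k m k' m')%C =
  (lsum l (fun k => lsum l (fun m => g k m k m)) +
   lsum l (fun k => lsum l (fun m => g k m m k)) -
   lsum l (fun k => g k k k k))%C.
Proof.
  intros Hnd.
  (* Spread the diagonal sum over [m] so that all three sums can be merged termwise. *)
  rewrite <- (lsum_ext l (fun k => lsum l (fun m => delta m k * g k m k k))%C
    (fun k => g k k k k)) by (intros k Hk; now apply (lsum_pick l k (fun m => g k m k k))).
  unfold lsum4. rewrite <- lsum_add, <- lsum_sub.
  apply lsum_ext; intros k Hk. rewrite <- lsum_add, <- lsum_sub.
  apply lsum_ext; intros m Hm.
  rewrite <- (lsum2_pick l k k (fun k' m' => delta m k * g k m k' m'))%C,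
    <- (lsum2_pick l k m (fun k' m' => g k m k' m')),
    <- (lsum2_pick l m k (fun k' m' => g k m k' m')) by assumption.
  rewrite <- lsum_add, <- lsum_sub. apply lsum_ext; intros k' _.
  rewrite <- lsum_add, <- lsum_sub. apply lsum_ext; intros m' _.
  rewrite moment_mask_pairs, RtoC_minus, RtoC_plus, !RtoC_mult, <- !delta_RtoC.
  rewrite (delta_sym k k'), (delta_sym m m'), (delta_sym k m'), (delta_sym m k'),
    (delta_sym k m). ring.
Qed.

Definition dvdR (d A : Z) : R := if Z.eqb (A mod d) 0 then 1 else 0.

Ltac RtoC_fold :=
  rewrite ?delta_RtoC;
  repeat (rewrite <- RtoC_mult || rewrite <- RtoC_plus || rewrite <- RtoC_minus).

Section Channels.

Variable d : Z.
Hypothesis d_pos : (0 < d)%Z.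

(** * Characters of Z/dZ *)

Lemma IZR_d_pos : 0 < IZR d.
Proof. now apply IZR_lt. Qed.

Lemma IZR_d_neq0 : IZR d <> 0.
Proof. apply Rgt_not_eq, IZR_d_pos. Qed.

Lemma omega_add (x y : R) : omega d (x + y) = (omega d x * omega d y)%C.
Proof.
  unfold omega, Cmult; simpl.
  replace (2 * PI * (x + y) / IZR d) with (2 * PI * x / IZR d + 2 * PI * y / IZR d)
    by (field; apply IZR_d_neq0).
  rewrite cos_plus, sin_plus. f_equal; ring.
Qed.

Lemma Cconj_omega (x : R) : Cconj (omega d x) = omega d (- x).
Proof.
  unfold omega, Cconj; simpl.
  replace (2 * PI * - x / IZR d) with (- (2 * PI * x / IZR d)) by (field; apply IZR_d_neq0).
  now rewrite cos_neg, sin_neg.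
Qed.

Lemma omega_0 : omega d 0 = RtoC 1.
Proof.
  unfold omega. replace (2 * PI * 0 / IZR d) with 0 by (field; apply IZR_d_neq0).
  now rewrite cos_0, sin_0.
Qed.

Lemma omega_IZR_add_mul (a t : Z) : omega d (IZR (a + t * d)) = omega d (IZR a).
Proof.
  unfold omega. rewrite plus_IZR, mult_IZR.
  replace (2 * PI * (IZR a + IZR t * IZR d) / IZR d)
    with (2 * PI * IZR a / IZR d + 2 * IZR t * PI) by (field; apply IZR_d_neq0).
  now rewrite cos_period_Z, sin_period_Z.
Qed.

Lemma omega_IZR_neq1 (a : Z) : (a mod d <> 0)%Z -> omega d (IZR a) <> RtoC 1.
Proof.
  intros Ha E.
  pose proof (Z.mod_pos_bound a d d_pos) as Hb.
  rewrite (Z.div_mod a d), Z.add_comm, Z.mul_comm, omega_IZR_add_mul in E by lia.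
  unfold omega, RtoC in E. injection E as Ecos Esin.
  set (th := 2 * PI * IZR (a mod d) / IZR d) in *.
  assert (Hr : 0 < IZR (a mod d) < IZR d) by (split; apply IZR_lt; lia).
  pose proof IZR_d_pos. pose proof PI_RGT_0.
  assert (Hth : 0 < th < 2 * PI).
  { unfold th, Rdiv. split.
    - apply Rmult_lt_0_compat; [nra | now apply Rinv_0_lt_compat].
    - apply (Rmult_lt_reg_r (IZR d)); [lra |].
      rewrite Rmult_assoc, Rinv_l by lra. nra. }
  destruct (sin_eq_O_2PI_0 th) as [Hz | [Hpi | H2pi]]; try lra.
  rewrite Hpi, cos_PI in Ecos. lra.
Qed.

Lemma omega_mul_conj (x1 x2 x3 x4 : R) :
  (omega d x1 * omega d x2 * Cconj (omega d x3 * omega d x4))%C =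
  omega d (x1 + x2 - x3 - x4).
Proof.
  rewrite Cmult_conj, !Cconj_omega.
  unfold Rminus. rewrite !omega_add. ring.
Qed.

Lemma scaled_omega_mul_conj (r x1 x2 x3 x4 : R) :
  (RtoC r * omega d x1 * (RtoC r * omega d x2) *
   Cconj (RtoC r * omega d x3 * (RtoC r * omega d x4)))%C =
  (RtoC (r ^ 4) * omega d (x1 + x2 - x3 - x4))%C.
Proof.
  rewrite <- omega_mul_conj, !Cmult_conj, Cconj_RtoC.
  replace (r ^ 4) with (r * r * r * r) by ring. rewrite !RtoC_mult. ring.
Qed.

Lemma Idx_NoDup : NoDup (Idx d).
Proof.
  apply NoDup_map_NoDup_ForallPairs; [|apply seq_NoDup].
  intros x y _ _ H. lia.
Qed.

Lemma In_Idx (x : Z) : In x (Idx d) <-> (- (d / 2) <= x < d - d / 2)%Z.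
Proof.
  unfold Idx. rewrite in_map_iff. split.
  - intros [k [<- Hk]]. apply in_seq in Hk. lia.
  - intros H. exists (Z.to_nat (x + d / 2)). rewrite in_seq. lia.
Qed.

Lemma Idx_length : length (Idx d) = Z.to_nat d.
Proof. unfold Idx. now rewrite length_map, length_seq. Qed.

Lemma wrap_In (z : Z) : In (wrap d z) (Idx d).
Proof.
  apply In_Idx. unfold wrap.
  pose proof (Z.mod_pos_bound (z + d / 2) d d_pos). lia.
Qed.

Lemma wrap_eq (z : Z) : exists t, wrap d z = (z + t * d)%Z.
Proof.
  exists (- ((z + d / 2) / d))%Z. unfold wrap. rewrite Z.mod_eq by lia. ring.
Qed.

Lemma wrap_add_neq (x u : Z) : (u mod d <> 0)%Z -> wrap d (x + u) <> x.
Proof.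
  intros Hu E. destruct (wrap_eq (x + u)) as [t Ht].
  apply Hu. replace u with (- t * d)%Z by nia. apply Z.mod_mul. lia.
Qed.

Lemma mod_neq0_Idx (u : Z) : In u (Idx d) -> u <> 0%Z -> (u mod d <> 0)%Z.
Proof.
  rewrite In_Idx. intros Hu Hu0 Hm.
  apply Z.mod_divide in Hm as [t ->]; [|lia].
  assert (0 <= d / 2 < d)%Z by (split; [apply Z.div_pos | apply Z.div_lt]; lia).
  destruct (Z.lt_trichotomy t 0) as [? | [-> | ?]]; nia.
Qed.

Lemma dvdR_add_mul (A t : Z) : dvdR d (A + t * d) = dvdR d A.
Proof. unfold dvdR. now rewrite Z.mod_add by lia. Qed.

Lemma dvdR_opp (A : Z) : dvdR d (- A) = dvdR d A.
Proof.
  unfold dvdR.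
  destruct (Z.eqb_spec (A mod d) 0) as [H | H], (Z.eqb_spec ((- A) mod d) 0) as [H' | H'];
    try reflexivity; exfalso.
  - now apply H', Z_mod_zero_opp_full.
  - apply H. rewrite <- (Z.opp_involutive A). now apply Z_mod_zero_opp_full.
Qed.

Lemma dvdR_0 : dvdR d 0 = 1.
Proof. unfold dvdR. now rewrite Z.mod_0_l by lia. Qed.

Lemma dvdR_sub_Idx (x y : Z) :
  In x (Idx d) -> In y (Idx d) -> dvdR d (x - y) = deltaR x y.
Proof.
  rewrite !In_Idx. intros Hx Hy. unfold dvdR, deltaR.
  destruct (Z.eqb_spec x y) as [-> | Hne].
  - now rewrite Z.sub_diag, Z.mod_0_l by lia.
  - destruct (Z.eqb_spec ((x - y) mod d) 0) as [H | H]; [exfalso | reflexivity].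
    apply Z.mod_divide in H as [t Ht]; [|lia].
    destruct (Z.lt_trichotomy t 0) as [? | [-> | ?]]; nia.
Qed.

Lemma dvdR_sub_wrap (x y : Z) :
  In y (Idx d) -> dvdR d (x - y) = deltaR (wrap d x) y.
Proof.
  intros Hy. destruct (wrap_eq x) as [t Ht].
  rewrite <- dvdR_sub_Idx, Ht by auto using wrap_In.
  replace (x + t * d - y)%Z with (x - y + t * d)%Z by ring.
  now rewrite dvdR_add_mul.
Qed.

Lemma dvdR_shift_wrap (x y i u : Z) :
  In y (Idx d) -> dvdR d (x - y - i + wrap d (i + u)) = deltaR (wrap d (x + u)) y.
Proof.
  intros Hy. destruct (wrap_eq (i + u)) as [t Ht]. rewrite Ht.
  replace (x - y - i + (i + u + t * d))%Z with (x + u - y + t * d)%Z by ring.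
  now rewrite dvdR_add_mul, dvdR_sub_wrap.
Qed.

Lemma lsum_Idx_omega (A : Z) :
  lsum (Idx d) (fun k => omega d (IZR (k * A))) = RtoC (IZR d * dvdR d A).
Proof.
  unfold dvdR. destruct (Z.eqb_spec (A mod d) 0) as [HA | HA].
  - rewrite (lsum_ext _ _ (fun _ => RtoC 1)).
    + rewrite lsum_const, Idx_length, INR_IZR_INZ, Z2Nat.id, Rmult_1_r by lia. ring.
    + intros k _. rewrite (Z.div_mod A d), HA by lia.
      replace (k * (d * (A / d) + 0))%Z with (0 + k * (A / d) * d)%Z by ring.
      now rewrite omega_IZR_add_mul, omega_0.
  - set (T := lsum (Idx d) (fun k => omega d (IZR (k * A)))).
    set (g := fun j : nat => (Z.of_nat j - d / 2)%Z).
    assert (Hrot : (omega d (IZR A) * T)%C = T).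
    { unfold T, Idx. fold g. rewrite <- lsum_mull, !lsum_map.
      rewrite <- (lsum_seq_shift _ (fun j => omega d (IZR (g j * A)))).
      - rewrite <- seq_shift, lsum_map. apply lsum_ext. intros j _.
        rewrite <- omega_add, <- plus_IZR. unfold g. do 2 f_equal. lia.
      - unfold g. replace ((Z.of_nat (Z.to_nat d) - d / 2) * A)%Z
          with ((Z.of_nat 0 - d / 2) * A + A * d)%Z by lia.
        now rewrite omega_IZR_add_mul. }
    assert (Hne : (omega d (IZR A) - RtoC 1)%C <> RtoC 0).
    { intros E. apply (omega_IZR_neq1 A HA).
      replace (omega d (IZR A)) with (omega d (IZR A) - RtoC 1 + RtoC 1)%C by ring.
      rewrite E. ring. }
    replace T with (/ (omega d (IZR A) - RtoC 1) * (omega d (IZR A) * T - T))%C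
      by (field; exact Hne).
    rewrite Hrot, Rmult_0_r. apply injective_projections; simpl; ring.
Qed.

Lemma lsum_Idx_omega_lin (h : Z -> Z) (A : Z) :
  (forall k, h k = k * A)%Z ->
  lsum (Idx d) (fun k => omega d (IZR (h k))) = RtoC (IZR d * dvdR d A).
Proof.
  intros Hh. rewrite <- lsum_Idx_omega. apply lsum_ext. intros k _. now rewrite Hh.
Qed.

Lemma lsum2_Idx_omega_lin (h : Z -> Z -> Z) (A B : Z) :
  (forall k m, h k m = k * A + m * B)%Z ->
  lsum (Idx d) (fun k => lsum (Idx d) (fun m => omega d (IZR (h k m)))) =
  RtoC (IZR d * dvdR d A * (IZR d * dvdR d B)).
Proof.
  intros Hh.
  rewrite (lsum_ext _ _ (fun k => omega d (IZR (k * A)) * RtoC (IZR d * dvdR d B)))%C.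
  - now rewrite lsum_mulr, lsum_Idx_omega, <- RtoC_mult.
  - intros k _. rewrite <- lsum_Idx_omega, <- lsum_mull. apply lsum_ext. intros m _.
    now rewrite Hh, plus_IZR, omega_add.
Qed.

(** * Averaging over alpha and beta *)

Lemma is_RInt_omega (c : C) (A : R) (M : Z) :
  is_RInt (V := C_R_NormedModule) (fun t => c * omega d (A + IZR M * t))%C 0 (IZR d)
    (c * RtoC (IZR d * deltaR M 0) * omega d A)%C.
Proof.
  unfold deltaR. destruct (Z.eqb_spec M 0) as [-> | HM].
  - apply (is_RInt_ext (V := C_R_NormedModule) (fun _ => c * omega d A)%C).
    { intros t _. now rewrite Rmult_0_l, Rplus_0_r. }
    eapply is_RInt_C_eq; [apply is_RInt_C_const |].
    rewrite Rminus_0_r, Rmult_1_r. ring.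
  - assert (HMr : IZR M <> 0) by now apply not_0_IZR.
    pose proof IZR_d_neq0. pose proof PI_RGT_0.
    set (K := IZR d / (2 * PI * IZR M)).
    set (th := fun t => 2 * PI * (A + IZR M * t) / IZR d).
    assert (Hth : th (IZR d) = th 0 + 2 * IZR M * PI) by (unfold th; field; auto).
    (* Antiderivatives: real and imaginary parts of [K * c * (-i) * omega (A + M t)]. *)
    eapply is_RInt_C_eq; [apply is_RInt_fct_extend_pair; unfold omega, th, Cmult; simpl |].
    + apply (is_RInt_derive_eq0 (fun t => K * (fst c * sin (th t) + snd c * cos (th t)))).
      * intros x. unfold th. auto_derive; [easy |].
        unfold K, Rdiv. field. repeat split; auto with real.
      * intros x. apply (ex_derive_continuous (V := R_CompleteNormedModule)).
        auto_derive. easy.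
      * cbv beta. now rewrite Hth, sin_period_Z, cos_period_Z.
    + apply (is_RInt_derive_eq0 (fun t => K * (snd c * sin (th t) - fst c * cos (th t)))).
      * intros x. unfold th. auto_derive; [easy |].
        unfold K, Rdiv. field. repeat split; auto with real.
      * intros x. apply (ex_derive_continuous (V := R_CompleteNormedModule)).
        auto_derive. easy.
      * cbv beta. now rewrite Hth, sin_period_Z, cos_period_Z.
    + rewrite Rmult_0_r. apply injective_projections; simpl; ring.
Qed.

Definition is_RInt_sq (f : R -> R -> C) (v : C) : Prop :=
  exists h : R -> C,
    (forall al, is_RInt (V := C_R_NormedModule) (f al) 0 (IZR d) (h al)) /\
    is_RInt (V := C_R_NormedModule) h 0 (IZR d) v.

Lemma is_RInt_sq_add (f g : R -> R -> C) (v w : C) :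
  is_RInt_sq f v -> is_RInt_sq g w -> is_RInt_sq (fun al be => f al be + g al be)%C (v + w)%C.
Proof.
  intros [h [Hf Hh]] [h' [Hg Hh']]. exists (fun al => h al + h' al)%C. split.
  - intros al. exact (is_RInt_plus _ _ _ _ _ _ (Hf al) (Hg al)).
  - exact (is_RInt_plus _ _ _ _ _ _ Hh Hh').
Qed.

Lemma is_RInt_sq_omega (c : C) (N M : Z) :
  is_RInt_sq (fun al be => c * omega d (IZR N * al + IZR M * be))%C
    (c * RtoC (IZR d * IZR d * deltaR N 0 * deltaR M 0))%C.
Proof.
  exists (fun al => c * RtoC (IZR d * deltaR M 0) * omega d (IZR N * al))%C. split.
  - intros al. apply is_RInt_omega.
  - eapply is_RInt_C_eq.
    + apply (is_RInt_ext (V := C_R_NormedModule)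
        (fun al => c * RtoC (IZR d * deltaR M 0) * omega d (0 + IZR N * al))%C).
      * intros al _. now rewrite Rplus_0_l.
      * apply is_RInt_omega.
    + rewrite omega_0, !RtoC_mult. ring.
Qed.

Lemma is_RInt_sq_lsum {A : Type} (l : list A) (F : A -> R -> R -> C) (v : A -> C) :
  (forall x, In x l -> is_RInt_sq (F x) (v x)) ->
  is_RInt_sq (fun al be => lsum l (fun x => F x al be)) (lsum l v).
Proof.
  induction l as [|x l IH]; intros H.
  - exists (fun _ => RtoC 0). split; [intros al |]; apply is_RInt_C_0.
  - apply is_RInt_sq_add.
    + apply H. now left.
    + apply IH. intros y Hy. apply H. now right.
Qed.

Lemma Expect_ext (f g : R -> R -> C) :
  (forall al be, f al be = g al be) -> Expect d f = Expect d g.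
Proof.
  intros H. f_equal.
  apply functional_extensionality; intros al.
  apply functional_extensionality; intros be. apply H.
Qed.

Lemma Expect_is_RInt_sq (f : R -> R -> C) (v : C) :
  is_RInt_sq f v -> Expect d f = (RtoC (/ (IZR d * IZR d)) * v)%C.
Proof.
  intros [h [Hf Hh]]. unfold Expect. f_equal.
  replace (fun al => RInt (V := C_R_CompleteNormedModule) (fun be => f al be) 0 (IZR d)) with h.
  - exact (is_RInt_unique (V := C_R_CompleteNormedModule) _ _ _ _ Hh).
  - apply functional_extensionality; intros al. symmetry.
    exact (is_RInt_unique (V := C_R_CompleteNormedModule) _ _ _ _ (Hf al)).
Qed.

Lemma Expect_omega (c : C) (N M : Z) :
  Expect d (fun al be => c * omega d (IZR N * al + IZR M * be))%C =
  (c * RtoC (deltaR N 0 * deltaR M 0))%C.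
Proof.
  rewrite (Expect_is_RInt_sq _ _ (is_RInt_sq_omega c N M)).
  pose proof IZR_d_neq0.
  apply injective_projections; simpl; field; auto.
Qed.

Lemma Expect_lsum4_omega (c : Z -> Z -> Z -> Z -> C) (N M : Z -> Z -> Z -> Z -> Z) :
  Expect d (fun al be => lsum4 (Idx d) (fun k m k' m' =>
    c k m k' m' * omega d (IZR (N k m k' m') * al + IZR (M k m k' m') * be)))%C =
  lsum4 (Idx d) (fun k m k' m' =>
    c k m k' m' * RtoC (deltaR (N k m k' m') 0 * deltaR (M k m k' m') 0))%C.
Proof.
  rewrite (Expect_is_RInt_sq _ (lsum4 (Idx d) (fun k m k' m' => c k m k' m' *
    RtoC (IZR d * IZR d * deltaR (N k m k' m') 0 * deltaR (M k m k' m') 0))))%C.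
  2: { unfold lsum4. do 4 (apply is_RInt_sq_lsum; intros).
       apply is_RInt_sq_omega. }
  rewrite <- lsum4_mull. apply lsum4_ext. intros k m k' m' _ _ _ _.
  rewrite Cmult_comm, <- Cmult_assoc, <- RtoC_mult. do 2 f_equal.
  field. apply IZR_d_neq0.
Qed.

(** * The channels G, G~ and R on matrix units *)

Lemma conj2_diag (U : op1) (u : Z -> C) (X : op2) (a b a' b' : Z) :
  (forall x y, In x (Idx d) -> U x y = (u x * delta y x)%C) ->
  In a (Idx d) -> In b (Idx d) -> In a' (Idx d) -> In b' (Idx d) ->
  conj2 d U X a b a' b' = (X a b a' b' * (u a * u b * Cconj (u a' * u b')))%C.
Proof.
  intros HU Ha Hb Ha' Hb'. unfold conj2, mul2, tens, adj2.
  assert (Hleft : forall c e,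
    sumC d (fun c0 => sumC d (fun e0 => U a c0 * U b e0 * X c0 e0 c e))%C =
    (u a * u b * X a b c e)%C).
  { intros c e. rewrite sumC_lsum.
    rewrite <- (lsum2_pick (Idx d) a b (fun c0 e0 => u a * u b * X c0 e0 c e))%C
      by auto using Idx_NoDup.
    apply lsum_ext; intros c0 _. rewrite sumC_lsum. apply lsum_ext; intros e0 _.
    rewrite !HU by assumption. ring. }
  rewrite sumC_lsum.
  rewrite <- (lsum2_pick (Idx d) a' b' (fun c e => X a b c e * (u a * u b * Cconj (u a' * u b'))))%C
    by auto using Idx_NoDup.
  apply lsum_ext; intros c _. rewrite sumC_lsum. apply lsum_ext; intros e _.
  rewrite Hleft, !HU by assumption. rewrite !Cmult_conj, !Cconj_delta. ring.
Qed.

Lemma conj2_ketbra (U : op1) (p q p' q' x y x' y' : Z) :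
  In p (Idx d) -> In q (Idx d) -> In p' (Idx d) -> In q' (Idx d) ->
  conj2 d U (ketbra p q p' q') x y x' y' = (U x p * U y q * Cconj (U x' p' * U y' q'))%C.
Proof.
  intros Hp Hq Hp' Hq'. unfold conj2, mul2, tens, adj2, ketbra.
  assert (Hleft : forall c e,
    sumC d (fun c0 => sumC d (fun e0 =>
      U x c0 * U y e0 * (delta c0 p * delta e0 q * (delta c p' * delta e q'))))%C =
    (U x p * U y q * (delta c p' * delta e q'))%C).
  { intros c e. rewrite sumC_lsum.
    rewrite <- (lsum2_pick (Idx d) p q (fun c0 e0 => U x c0 * U y e0 * (delta c p' * delta e q')))%C
      by auto using Idx_NoDup.
    apply lsum_ext; intros c0 _. rewrite sumC_lsum. apply lsum_ext; intros e0 _. ring. }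
  rewrite sumC_lsum.
  rewrite <- (lsum2_pick (Idx d) p' q' (fun c e => U x p * U y q * Cconj (U x' c * U y' e)))%C
    by auto using Idx_NoDup.
  apply lsum_ext; intros c _. rewrite sumC_lsum. apply lsum_ext; intros e _.
  rewrite Hleft. ring.
Qed.

Lemma sum2_ketbra_entry (f g h : Z -> Z) (a b a' b' : Z) :
  In a (Idx d) ->
  sum2 d (fun c => ketbra c (f c) (g c) (h c)) a b a' b' =
  (delta (f a) b * delta (g a) a' * delta (h a) b')%C.
Proof.
  intros Ha. unfold sum2, ketbra. rewrite sumC_lsum.
  rewrite <- (lsum_pick (Idx d) a (fun c => delta (f c) b * delta (g c) a' * delta (h c) b'))%C
    by auto using Idx_NoDup.
  apply lsum_ext. intros c _.
  rewrite (delta_sym a c), (delta_sym b), (delta_sym a'), (delta_sym b'). ring.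
Qed.

Lemma Vop_entry (al be : R) (x y : Z) :
  In x (Idx d) -> Vop d al be x y = (omega d (al * IZR x + be * IZR x ^ 2) * delta y x)%C.
Proof.
  intros Hx. unfold Vop. rewrite sumC_lsum.
  rewrite <- (lsum_pick (Idx d) x (fun j => omega d (al * IZR j + be * IZR j ^ 2) * delta y j))%C
    by auto using Idx_NoDup.
  apply lsum_ext. intros j _. rewrite Cconj_delta, (delta_sym x j). ring.
Qed.

Lemma Vtop_entry (al be : R) (x y : Z) :
  Vtop d al be x y = lsum (Idx d) (fun k =>
    RtoC (/ IZR d) * omega d (IZR k * al + IZR (k * k) * be + IZR (k * (x - y))))%C.
Proof.
  unfold Vtop. rewrite sumC_lsum. apply lsum_ext. intros k _. unfold fket.
  rewrite Cmult_conj, Cconj_RtoC, Cconj_omega.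
  replace (RtoC (/ IZR d)) with (RtoC (/ sqrt (IZR d)) * RtoC (/ sqrt (IZR d)))%C.
  2: { rewrite <- RtoC_mult, <- Rinv_mult, sqrt_sqrt; [easy |].
       apply Rlt_le, IZR_d_pos. }
  replace (IZR k * al + IZR (k * k) * be + IZR (k * (x - y)))
    with (al * IZR k + be * IZR k ^ 2 + IZR (k * x) + - IZR (k * y))
    by (rewrite !mult_IZR, minus_IZR; ring).
  rewrite !omega_add. ring.
Qed.

Lemma Gch_entry (X : op2) (a b a' b' : Z) :
  In a (Idx d) -> In b (Idx d) -> In a' (Idx d) -> In b' (Idx d) ->
  Gch d X a b a' b' = (X a b a' b' * RtoC (moment_mask a b a' b'))%C.
Proof.
  intros Ha Hb Ha' Hb'. unfold Gch, moment_mask.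
  rewrite <- Expect_omega.
  apply Expect_ext. intros al be.
  rewrite (conj2_diag _ (fun x => omega d (al * IZR x + be * IZR x ^ 2)))
    by auto using Vop_entry.
  rewrite omega_mul_conj. do 2 f_equal.
  rewrite !minus_IZR, !plus_IZR, !mult_IZR. ring.
Qed.

Lemma Gch_ketbra (p q p' q' : Z) :
  op_eq d (Gch d (ketbra p q p' q')) (scal2 (moment_mask p q p' q') (ketbra p q p' q')).
Proof.
  intros a b a' b' Ha Hb Ha' Hb'. rewrite Gch_entry by assumption.
  unfold scal2, ketbra. rewrite !delta_RtoC. unfold deltaR.
  destruct (Z.eqb_spec a p), (Z.eqb_spec b q), (Z.eqb_spec a' p'), (Z.eqb_spec b' q');
    subst; ring.
Qed.

Lemma conj2_Vtop_ketbra (al be : R) (p q p' q' x y x' y' : Z) :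
  In p (Idx d) -> In q (Idx d) -> In p' (Idx d) -> In q' (Idx d) ->
  conj2 d (Vtop d al be) (ketbra p q p' q') x y x' y' =
  lsum4 (Idx d) (fun k m k' m' =>
    RtoC (/ IZR d ^ 4) *
    omega d (IZR (k * (x - p) + m * (y - q) - k' * (x' - p') - m' * (y' - q'))) *
    omega d (IZR (k + m - k' - m') * al + IZR (k * k + m * m - k' * k' - m' * m') * be))%C.
Proof.
  intros Hp Hq Hp' Hq'.
  rewrite conj2_ketbra, !Vtop_entry, lsum4_prod by assumption.
  apply lsum4_ext; intros k m k' m' _ _ _ _.
  rewrite scaled_omega_mul_conj, <- Cmult_assoc, <- omega_add, pow_inv. do 2 f_equal.
  rewrite !minus_IZR, !plus_IZR, !mult_IZR, !minus_IZR. ring.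
Qed.

Lemma Gtch_ketbra (p q p' q' x y x' y' : Z) :
  In p (Idx d) -> In q (Idx d) -> In p' (Idx d) -> In q' (Idx d) ->
  Gtch d (ketbra p q p' q') x y x' y' =
  RtoC (/ IZR d ^ 2 * (dvdR d (x - x' - p + p') * dvdR d (y - y' - q + q') +
                       dvdR d (x - y' - p + q') * dvdR d (y - x' - q + p')) -
        / IZR d ^ 3 * dvdR d (x + y - x' - y' - p - q + p' + q')).
Proof.
  intros Hp Hq Hp' Hq'. unfold Gtch.
  set (ph := fun k m k' m' => (k * (x - p) + m * (y - q) - k' * (x' - p') - m' * (y' - q'))%Z).
  rewrite (Expect_ext _ _ (fun al be => conj2_Vtop_ketbra al be p q p' q' x y x' y' Hp Hq Hp' Hq')).
  rewrite Expect_lsum4_omega.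
  rewrite (lsum4_ext _ _ (fun k m k' m' =>
    RtoC (/ IZR d ^ 4) * (RtoC (moment_mask k m k' m') * omega d (IZR (ph k m k' m')))))%C
    by (intros; unfold moment_mask, ph; rewrite RtoC_mult; ring).
  rewrite lsum4_mull, lsum4_moment_mask by apply Idx_NoDup.
  rewrite (lsum2_Idx_omega_lin (fun k m => ph k m k m) (x - x' - p + p') (y - y' - q + q')),
    (lsum2_Idx_omega_lin (fun k m => ph k m m k) (x - y' - p + q') (y - x' - q + p')),
    (lsum_Idx_omega_lin (fun k => ph k k k k) (x + y - x' - y' - p - q + p' + q'))
    by (intros; unfold ph; ring).
  rewrite <- RtoC_plus, <- RtoC_minus, <- RtoC_mult. f_equal.
  pose proof IZR_d_neq0. field. assumption.
Qed.

Lemma Gtch_op_eq (X Y : op2) (a b a' b' : Z) :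
  op_eq d X Y -> Gtch d X a b a' b' = Gtch d Y a b a' b'.
Proof.
  intros HXY. unfold Gtch. apply Expect_ext. intros al be.
  unfold conj2, mul2. rewrite !sumC_lsum. apply lsum_ext; intros c Hc.
  rewrite !sumC_lsum. apply lsum_ext; intros e He. f_equal.
  rewrite !sumC_lsum. apply lsum_ext; intros c0 Hc0.
  rewrite !sumC_lsum. apply lsum_ext; intros e0 He0. now rewrite HXY.
Qed.

Lemma Gtch_zero (a b a' b' : Z) : Gtch d zero2 a b a' b' = RtoC 0.
Proof.
  unfold Gtch.
  transitivity (Expect d (fun al be => RtoC 0 * omega d (IZR 0 * al + IZR 0 * be)))%C.
  - apply Expect_ext. intros al be. rewrite Cmult_0_l.
    unfold conj2, mul2, zero2. rewrite sumC_lsum. apply lsum_eq0. intros c _.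
    rewrite sumC_lsum. apply lsum_eq0. intros e _.
    rewrite sumC_lsum, lsum_eq0; [apply Cmult_0_l |]. intros c0 _.
    rewrite sumC_lsum. apply lsum_eq0. intros e0 _. apply Cmult_0_r.
  - rewrite Expect_omega. apply Cmult_0_l.
Qed.

Lemma Rch_ketbra (p q p' q' a b a' b' : Z) :
  In p (Idx d) -> In q (Idx d) -> In p' (Idx d) -> In q' (Idx d) ->
  In a (Idx d) -> In b (Idx d) -> In a' (Idx d) -> In b' (Idx d) ->
  Rch d (ketbra p q p' q') a b a' b' =
  RtoC (moment_mask p q p' q' * moment_mask a b a' b' *
        (/ IZR d ^ 2 * (dvdR d (a - a' - p + p') * dvdR d (b - b' - q + q') +
                        dvdR d (a - b' - p + q') * dvdR d (b - a' - q + p')) -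
         / IZR d ^ 3)).
Proof.
  intros Hp Hq Hp' Hq' Ha Hb Ha' Hb'. unfold Rch. rewrite Gch_entry by assumption.
  destruct (pair_eq_dec p q p' q') as [Hpq | Hpq].
  - assert (HG : op_eq d (Gch d (ketbra p q p' q')) (ketbra p q p' q')).
    { intros x y x' y' Hx Hy Hx' Hy'.
      rewrite Gch_ketbra, (moment_mask_eq1 p q p' q' Hpq) by assumption. apply Cmult_1_l. }
    rewrite (Gtch_op_eq _ _ _ _ _ _ HG), Gtch_ketbra, (moment_mask_eq1 p q p' q' Hpq)
      by assumption.
    destruct (pair_eq_dec a b a' b') as [Hab | Hab].
    + replace (a + b - a' - b' - p - q + p' + q')%Z with 0%Z
        by (destruct Hab as [[-> ->] | [-> ->]], Hpq as [[-> ->] | [-> ->]]; ring).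
      rewrite (moment_mask_eq1 a b a' b' Hab), dvdR_0, <- RtoC_mult. f_equal. ring.
    + rewrite (moment_mask_eq0 a b a' b' Hab), <- RtoC_mult. f_equal. ring.
  - assert (HG : op_eq d (Gch d (ketbra p q p' q')) zero2).
    { intros x y x' y' Hx Hy Hx' Hy'.
      rewrite Gch_ketbra, (moment_mask_eq0 p q p' q' Hpq) by assumption. apply Cmult_0_l. }
    rewrite (Gtch_op_eq _ _ _ _ _ _ HG), Gtch_zero, (moment_mask_eq0 p q p' q' Hpq).
    rewrite <- RtoC_mult. f_equal. ring.
Qed.

Lemma Rch_ketbra_not_pair (i j i' j' : Z) :
  In i (Idx d) -> In j (Idx d) -> In i' (Idx d) -> In j' (Idx d) ->
  ~ ((i' = i /\ j' = j) \/ (i' = j /\ j' = i)) ->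
  op_eq d (Rch d (ketbra i j i' j')) zero2.
Proof.
  intros Hi Hj Hi' Hj' Hne a b a' b' Ha Hb Ha' Hb'.
  rewrite Rch_ketbra, moment_mask_eq0 by assumption.
  unfold zero2. f_equal. ring.
Qed.

Lemma Rch_ketbra_shift (u i : Z) :
  (u mod d <> 0)%Z -> In i (Idx d) ->
  op_eq d (Rch d (ketbra i (wrap d (i + u)) i (wrap d (i + u))))
    (sub2 (add2 (scal2 (/ IZR d ^ 2)
                   (sum2 d (fun a => ketbra a (wrap d (a + u)) a (wrap d (a + u)))))
                (scal2 (/ IZR d ^ 2) Iop))
          (corr d)).
Proof.
  intros Hu Hi a b a' b' Ha Hb Ha' Hb'.
  rewrite Rch_ketbra, moment_mask_refl by auto using wrap_In.
  unfold corr, sub2, add2, scal2, Iop, Fop, Eop.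
  rewrite (sum2_ketbra_entry (fun c => wrap d (c + u)) (fun c => c)) by assumption.
  RtoC_fold. f_equal.
  rewrite !Z.sub_add.
  replace (b - a' - wrap d (i + u) + i)%Z with (- (a' - b - i + wrap d (i + u)))%Z by ring.
  rewrite dvdR_opp, !dvdR_sub_Idx, !dvdR_shift_wrap by assumption.
  transitivity (/ IZR d ^ 2 * (moment_mask a b a' b' * (deltaR a a' * deltaR b b')) +
    / IZR d ^ 2 * (moment_mask a b a' b' *
                   (deltaR (wrap d (a + u)) b' * deltaR (wrap d (a' + u)) b)) -
    / IZR d ^ 3 * moment_mask a b a' b'); [ring |].
  rewrite moment_mask_absorb_id, (moment_mask_shift (fun x => wrap d (x + u)))
    by now apply wrap_add_neq.
  rewrite moment_mask_pairs. ring.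
Qed.

Lemma Rch_ketbra_shift_swap (u i : Z) :
  (u mod d <> 0)%Z -> In i (Idx d) ->
  op_eq d (Rch d (ketbra i (wrap d (i + u)) (wrap d (i + u)) i))
    (sub2 (add2 (scal2 (/ IZR d ^ 2)
                   (sum2 d (fun a => ketbra a (wrap d (a + u)) (wrap d (a + u)) a)))
                (scal2 (/ IZR d ^ 2) Fop))
          (corr d)).
Proof.
  intros Hu Hi a b a' b' Ha Hb Ha' Hb'.
  rewrite Rch_ketbra, moment_mask_swap by auto using wrap_In.
  unfold corr, sub2, add2, scal2, Iop, Fop, Eop.
  rewrite (sum2_ketbra_entry (fun c => wrap d (c + u)) (fun c => wrap d (c + u)) (fun c => c))
    by assumption.
  RtoC_fold. f_equal.
  replace (b - b' - wrap d (i + u) + i)%Z with (- (b' - b - i + wrap d (i + u)))%Z by ring.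
  rewrite !Z.sub_add.
  rewrite dvdR_opp, !dvdR_sub_Idx, !dvdR_shift_wrap by assumption.
  transitivity (/ IZR d ^ 2 * (moment_mask a b a' b' *
                   (deltaR (wrap d (a + u)) a' * deltaR (wrap d (b' + u)) b)) +
    / IZR d ^ 2 * (moment_mask a b a' b' * (deltaR a b' * deltaR b a')) -
    / IZR d ^ 3 * moment_mask a b a' b'); [ring |].
  rewrite moment_mask_absorb_swap, (moment_mask_shift_swap (fun x => wrap d (x + u)))
    by now apply wrap_add_neq.
  rewrite moment_mask_pairs. ring.
Qed.

Lemma Rch_ketbra_same (i : Z) :
  In i (Idx d) ->
  op_eq d (Rch d (ketbra i i i i)) (sub2 (scal2 (/ IZR d ^ 2) (add2 Iop Fop)) (corr d)).
Proof.
  intros Hi a b a' b' Ha Hb Ha' Hb'.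
  rewrite Rch_ketbra, moment_mask_refl by assumption.
  unfold corr, sub2, add2, scal2, Iop, Fop, Eop.
  RtoC_fold. f_equal.
  rewrite !Z.sub_add, !dvdR_sub_Idx by assumption.
  transitivity (/ IZR d ^ 2 * (moment_mask a b a' b' * (deltaR a a' * deltaR b b')) +
    / IZR d ^ 2 * (moment_mask a b a' b' * (deltaR a b' * deltaR b a')) -
    / IZR d ^ 3 * moment_mask a b a' b'); [ring |].
  rewrite moment_mask_absorb_id, moment_mask_absorb_swap, moment_mask_pairs. ring.
Qed.

End Channels.

Theorem lemma5 (d : Z) (hd2 : (2 <= d)%Z) (hev : Z.Even d) :
  (forall i j i' j' : Z,
     In i (Idx d) -> In j (Idx d) -> In i' (Idx d) -> In j' (Idx d) ->
     ~ ((i' = i /\ j' = j) \/ (i' = j /\ j' = i)) ->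
     op_eq d (Rch d (ketbra i j i' j')) zero2) /\
  (forall i u : Z, In i (Idx d) -> In u (Idx d) -> u <> 0%Z ->
     op_eq d (Rch d (ketbra i (wrap d (i + u)) i (wrap d (i + u))))
       (sub2 (add2 (scal2 (/ IZR d ^ 2)
                       (sum2 d (fun a => ketbra a (wrap d (a + u)) a (wrap d (a + u)))))
                   (scal2 (/ IZR d ^ 2) Iop))
             (corr d)) /\
     op_eq d (Rch d (ketbra i (wrap d (i + u)) (wrap d (i + u)) i))
       (sub2 (add2 (scal2 (/ IZR d ^ 2)
                       (sum2 d (fun a => ketbra a (wrap d (a + u)) (wrap d (a + u)) a)))
                   (scal2 (/ IZR d ^ 2) Fop))
             (corr d))) /\
  (forall i : Z, In i (Idx d) ->
     op_eq d (Rch d (ketbra i i i i))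
       (sub2 (scal2 (/ IZR d ^ 2) (add2 Iop Fop)) (corr d))).
Proof.
  assert (hd : (0 < d)%Z) by lia.
  split; [| split].
  - exact (Rch_ketbra_not_pair d hd).
  - intros i u Hi Hu Hu0.
    pose proof (mod_neq0_Idx d hd u Hu Hu0) as Hmod.
    split; [apply Rch_ketbra_shift | apply Rch_ketbra_shift_swap]; assumption.
  - exact (Rch_ketbra_same d hd).
Qed.
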